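(* Let $\lambda\neq0$ be real and $n,k\ge0$ integers. Then $$\sum_{j=0}^{n}\binom{n+k}{j}S_{2,\lambda}^{[2]}(n-j+k,2k)\,\beta_{j,\lambda}^{(k)}=\binom{n+k}{k}\sum_{j=0}^{k}\binom{k}{j}(-1)^{k-j}\beta_{n,\lambda}^{(k-j)}.$$
   Context: For real $\lambda\neq0$, $(x)_{0,\lambda}=1$, $(x)_{n,\lambda}=x(x-\lambda)\cdots(x-(n-1)\lambda)$ for $n\ge1$; $e_{\lambda}(t)=\sum_{k\ge0}(1)_{k,\lambda}\frac{t^k}{k!}=(1+\lambda t)^{1/\lambda}$ (formal power series). The $2$-truncated degenerate Stirling numbers of the second kind: for $k\ge0$, $\frac{1}{k!}(e_\lambda(t)-1-t)^k=\sum_{n\ge 2k}S^{[2]}_{2,\lambda}(n,2k)\frac{t^n}{n!}$, with $S^{[2]}_{2,\lambda}(n,2k)=0$ for $0\le n<2k$. The degenerate Bernoulli numbers of order $\alpha$ (a nonnegative integer here): $\big(\frac{t}{e_\lambda(t)-1}\big)^\alpha=\sum_{n\ge0}\beta^{(\alpha)}_{n,\lambda}\frac{t^n}{n!}$; in particular $\beta^{(0)}_{n,\lambda}=1$ if $n=0$ and $0$ otherwise. *)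

(* Formal power series over a real field are represented by
   their coefficient sequences  nat -> R  (coefficient of t^n, NOT divided by n!). *)
From mathcomp Require Import all_boot all_order all_algebra.
Set Implicit Arguments. Unset Strict Implicit. Unset Printing Implicit Defensive.
Import Order.TTheory GRing.Theory Num.Theory.
Local Open Scope ring_scope.

Section Defs.
Variable R : realFieldType.

Definition dfall (lam x : R) (n : nat) : R := \prod_(i < n) (x - i%:R * lam).

Definition fps_mul (a b : nat -> R) : nat -> R :=
  fun n => \sum_(i < n.+1) a i * b (n - i)%N.

Definition fps_one : nat -> R := fun n => (n == 0%N)%:R.

Definition fps_exp (a : nat -> R) (k : nat) : nat -> R := iter k (fps_mul a) fps_one.

Fixpoint fps_inv_seq (g : nat -> R) (n : nat) : seq R :=
  match n with
  | 0%N => [:: (g 0%N)^-1]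
  | m.+1 => let s := fps_inv_seq g m in
            rcons s (- (g 0%N)^-1 * \sum_(i < m.+1) g i.+1 * nth 0 s (m - i)%N)
  end.
Definition fps_inv (g : nat -> R) : nat -> R := fun n => nth 0 (fps_inv_seq g n) n.

(* e_lambda(t) = sum_k (1)_{k,lambda} t^k / k! *)
Definition elam (lam : R) : nat -> R := fun k => dfall lam 1 k / (k`!)%:R.

Definition elam_m1t (lam : R) : nat -> R :=
  fun k => elam lam k - (k == 0%N)%:R - (k == 1%N)%:R.

(* 2-truncated degenerate Stirling numbers of the second kind S^{[2]}_{2,lambda}(n, 2k):
   (1/k!) (e_lambda(t) - 1 - t)^k = sum_n S(n,2k) t^n / n! *)
Definition S2trunc (lam : R) (n k : nat) : R :=
  (n`!)%:R / (k`!)%:R * fps_exp (elam_m1t lam) k n.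

(* (e_lambda(t) - 1)/t *)
Definition elam_m1_div_t (lam : R) : nat -> R := fun m => elam lam m.+1.

(* degenerate Bernoulli numbers of order alpha:
   (t/(e_lambda(t)-1))^alpha = sum_n beta^{(alpha)}_{n,lambda} t^n/n! *)
Definition dbern (lam : R) (alpha n : nat) : R :=
  (n`!)%:R * fps_exp (fps_inv (elam_m1_div_t lam)) alpha n.

End Defs.

From mathcomp Require Import all_boot all_order all_algebra.
From mathcomp Require Import ring zify.
Set Implicit Arguments. Unset Strict Implicit.
Import Order.TTheory GRing.Theory Num.Theory.
Local Open Scope ring_scope.

(* Put g := (e_lambda(t) - 1)/t, so that e_lambda(t) - 1 - t = t (g - 1).  Then
   (e_lambda(t) - 1 - t)^k g^-k = t^k (1 - g^-1)^k: the coefficient of t^(n+k)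
   on the left is the Cauchy product giving the left-hand side of the theorem,
   and on the right it is [t^n] (1 - g^-1)^k, which the binomial theorem expands
   into the right-hand side.  Power series are compared through their
   truncations at degree n + k, which are polynomials.  Nothing depends on
   lambda. *)

Section AgreeUpto.
Variable R : comNzRingType.

Definition agree_upto (N : nat) (p q : {poly R}) := forall i, (i <= N)%N -> p`_i = q`_i.

Lemma agree_upto_refl N p : agree_upto N p p.
Proof. by []. Qed.

Lemma agree_upto_trans N p q r :
  agree_upto N p q -> agree_upto N q r -> agree_upto N p r.
Proof. by move=> Hpq Hqr i Hi; rewrite Hpq // Hqr. Qed.

Lemma agree_upto_mul N p p' q q' :
  agree_upto N p p' -> agree_upto N q q' -> agree_upto N (p * q) (p' * q').
Proof.
move=> Hp Hq i Hi; rewrite !coefM; apply: eq_bigr => -[j /= Hj] _.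
by rewrite Hp ?Hq //; lia.
Qed.

Lemma agree_upto_exp N p q k : agree_upto N p q -> agree_upto N (p ^+ k) (q ^+ k).
Proof.
move=> Hpq; elim: k => [|k IH]; first exact: agree_upto_refl.
by rewrite !exprS; apply: agree_upto_mul.
Qed.

Lemma coef_exp_1subr (p : {poly R}) k n :
  ((1 - p) ^+ k)`_n = \sum_(j < k.+1) 'C(k, j)%:R * (-1) ^+ (k - j) * (p ^+ (k - j))`_n.
Proof.
rewrite addrC exprDn coef_sum; apply: eq_bigr => j _.
by rewrite expr1n mulr1 -scaleN1r exprZn coefMn coefZ mulr_natl mulrnAl.
Qed.

End AgreeUpto.

Section PowerSeries.
Variable R : realFieldType.
Implicit Types (a b g : nat -> R).

Definition trunc (N : nat) a : {poly R} := \poly_(i < N.+1) a i.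

Lemma coef_trunc N a i : (i <= N)%N -> (trunc N a)`_i = a i.
Proof. by move=> Hi; rewrite coef_poly ltnS Hi. Qed.

Lemma trunc_fps_mul N a b :
  agree_upto N (trunc N (fps_mul a b)) (trunc N a * trunc N b).
Proof.
move=> i Hi; rewrite coef_trunc // coefM; apply: eq_bigr => -[j /= Hj] _.
by rewrite !coef_trunc //; lia.
Qed.

Lemma trunc_fps_exp N a k : agree_upto N (trunc N (fps_exp a k)) (trunc N a ^+ k).
Proof.
elim: k => [|k IH] i Hi; first by rewrite coef_trunc // coef1.
rewrite exprS -[fps_exp a k.+1]/(fps_mul a (fps_exp a k)) trunc_fps_mul //.
exact: (agree_upto_mul (@agree_upto_refl _ N _) IH Hi).
Qed.

Lemma coef_fps_exp N a k i : (i <= N)%N -> fps_exp a k i = (trunc N a ^+ k)`_i.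
Proof. by move=> Hi; rewrite -trunc_fps_exp ?coef_trunc. Qed.

Lemma fps_exp_coef_lt a k i : a 0%N = 0 -> (i < k)%N -> fps_exp a k i = 0.
Proof.
move=> a0; elim: k i => [//|k IH] i lt_ik.
rewrite /fps_exp /= -/(fps_exp a k) /fps_mul big1 // => -[[|j] /= Hj] _.
  by rewrite a0 mul0r.
by rewrite IH ?mulr0 //; lia.
Qed.

Lemma size_fps_inv_seq g n : size (fps_inv_seq g n) = n.+1.
Proof. by elim: n => [|n IH] //=; rewrite size_rcons IH. Qed.

Lemma nth_fps_inv_seq g n m : (m <= n)%N -> nth 0 (fps_inv_seq g n) m = fps_inv g m.
Proof.
elim: n => [|n IH]; first by rewrite leqn0 => /eqP ->.
rewrite leq_eqVlt => /predU1P[-> //|lt_mn].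
by rewrite /= nth_rcons size_fps_inv_seq lt_mn IH.
Qed.

Lemma fps_invS g m :
  fps_inv g m.+1 = - (g 0%N)^-1 * \sum_(i < m.+1) g i.+1 * fps_inv g (m - i)%N.
Proof.
rewrite {1}/fps_inv /= nth_rcons size_fps_inv_seq ltnn eqxx.
by congr (_ * _); apply: eq_bigr => i _; rewrite nth_fps_inv_seq ?leq_subr.
Qed.

Lemma fps_mul_inv g n : g 0%N != 0 -> fps_mul g (fps_inv g) n = fps_one R n.
Proof.
move=> g0; case: n => [|m]; first by rewrite /fps_mul big_ord1 /fps_inv /= divff.
rewrite /fps_mul big_ord_recl subn0 fps_invS mulrA mulrN divff // mulN1r.
by under [X in _ + X]eq_bigr => i _ do rewrite lift0 subSS; rewrite addNr.
Qed.

Lemma trunc_fps_inv N g :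
  g 0%N != 0 -> agree_upto N (trunc N g * trunc N (fps_inv g)) 1.
Proof.
move=> g0 i Hi; rewrite -trunc_fps_mul // coef_trunc // fps_mul_inv //.
by rewrite coef1.
Qed.

Lemma sum_fps_exp_inv_exp g e n k :
  g 0%N != 0 -> e 0%N = 0 -> (forall i, e i.+1 = g i - (i == 0%N)%:R) ->
  \sum_(j < n.+1) fps_exp (fps_inv g) k j * fps_exp e k (n + k - j)
  = ((1 - trunc (n + k) (fps_inv g)) ^+ k)`_n.
Proof.
move=> g0 e0 eS; set b := trunc (n + k) (fps_inv g).
have e_Xg : agree_upto (n + k) (trunc (n + k) e) ('X * (trunc (n + k) g - 1)).
  move=> [|i] Hi; rewrite coefXM coef_trunc //=.
  by rewrite eS coefB coef1 coef_trunc // ltnW.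
have gb : agree_upto (n + k) ((trunc (n + k) g - 1) * b) (1 - b).
  by move=> i Hi; rewrite mulrBl mul1r !coefB trunc_fps_inv.
have ekbk : agree_upto (n + k) (trunc (n + k) e ^+ k * b ^+ k) ('X ^+ k * (1 - b) ^+ k).
  rewrite -!exprMn; apply: agree_upto_exp.
  apply: agree_upto_trans (agree_upto_mul e_Xg (@agree_upto_refl _ _ b)) _.
  by rewrite -mulrA; apply: agree_upto_mul.
rewrite (big_ord_widen (n + k).+1
  (fun j => fps_exp (fps_inv g) k j * fps_exp e k (n + k - j))) ?ltnS ?leq_addr //.
transitivity ((trunc (n + k) e ^+ k * b ^+ k)`_(n + k)); last first.
  by rewrite ekbk // coefXnM ltnNge leq_addl /= addnK.
rewrite mulrC coefM big_mkcond; apply: eq_bigr => -[j /= Hj] _.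
rewrite !(coef_fps_exp (N := n + k)) ?leq_subr //.
case: ifP => // /negbT; rewrite -ltnNge => lt_nj.
by rewrite -(coef_fps_exp e k) ?leq_subr // fps_exp_coef_lt ?mulr0 //; lia.
Qed.

End PowerSeries.

Section DegenerateExponential.
Variable R : realFieldType.
Variable lam : R.

Lemma elam_m1_div_t0 : elam_m1_div_t lam 0 = 1.
Proof. by rewrite /elam_m1_div_t /elam /dfall big_ord1 mul0r subr0 divr1. Qed.

Lemma elam_m1t0 : elam_m1t lam 0 = 0.
Proof. by rewrite /elam_m1t /elam /dfall big_ord0 divr1 subrr subr0. Qed.

Lemma elam_m1tS i : elam_m1t lam i.+1 = elam_m1_div_t lam i - (i == 0%N)%:R.
Proof. by rewrite /elam_m1t subr0. Qed.

End DegenerateExponential.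

Theorem theorem7 (R : realFieldType) (lam : R) (hlam : lam != 0) (n k : nat) :
  \sum_(j < n.+1) ('C(n + k, j))%:R * S2trunc lam (n - j + k) k * dbern lam k j
  = ('C(n + k, k))%:R *
    \sum_(j < k.+1) ('C(k, j))%:R * (-1) ^+ (k - j) * dbern lam (k - j) n.
Proof.
have kf0 : (k`!)%:R != 0 :> R by rewrite pnatr_eq0 -lt0n fact_gt0.
pose c : R := ((n + k)`!)%:R / (k`!)%:R.
have c_bin : c = 'C(n + k, k)%:R * (n`!)%:R.
  by rewrite /c -(@bin_fact (n + k) k) ?leq_addl // addnK !natrM; field.
transitivity (c * ((1 - trunc (n + k) (fps_inv (elam_m1_div_t lam))) ^+ k)`_n).
  rewrite -(sum_fps_exp_inv_exp (e := elam_m1t lam)) ?elam_m1_div_t0 ?oner_neq0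
    ?elam_m1t0 //; last exact: elam_m1tS.
  rewrite mulr_sumr; apply: eq_bigr => -[j /= Hj] _.
  have -> : (n - j + k = n + k - j)%N by lia.
  rewrite /S2trunc /dbern /c -(@bin_fact (n + k) j) ?natrM; last lia.
  by field.
rewrite c_bin -mulrA; congr (_ * _).
rewrite coef_exp_1subr mulr_sumr; apply: eq_bigr => j _.
rewrite /dbern (coef_fps_exp (N := n + k)) ?leq_addr //.
ring.
Qed.
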